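(* Let $f_1,\dots,f_k\in\mathbb{K}[\mathbf{x}]$ be nonzero multihomogeneous polynomials and $<$ a monomial order on $\mathbb{K}[\mathbf{x}]$. For every $\mathbf{d}\in\mathbb{Z}^r$, the polynomials corresponding to the rows of the matrix $\mathrm{M_3H}(\{f_1,\dots,f_k\},\mathbf{d},<)$ span the $\mathbb{K}$-vector space $[\langle f_1,\dots,f_k\rangle]_{\mathbf{d}}$.
   Context: $\mathbb{K}$ is a field of characteristic $0$; $\mathbb{K}[\mathbf{x}]$ is the polynomial ring in variables $x_{i,0},\dots,x_{i,n_i}$ ($1\le i\le r$), $\mathbb{Z}^r$-graded with $x_{i,j}$ of degree the $i$-th standard basis vector; $\mathbb{K}[\mathbf{x}]_{\mathbf{d}}$ and $[I]_{\mathbf{d}}$ denote multidegree-$\mathbf{d}$ parts (zero if $\mathbf{d}$ has a negative coordinate). A Macaulay matrix has columns indexed by monomials and rows representing polynomials (entry = coefficient). The procedure $\mathrm{M_3H}(\{f_1,\dots,f_k\},\mathbf{d},<)$ returns a Macaulay matrix with columns indexed by the monomials of $\mathbb{K}[\mathbf{x}]_{\mathbf{d}}$ in decreasing order for $<$, defined recursively: if $k=1$, start from the empty such matrix and set $\mathfrak{L}=\emptyset$; if $k>1$, start from the matrix $\mathrm{M_3H}(\{f_1,\dots,f_{k-1}\},\mathbf{d},<)$ and let $\mathfrak{L}$ be the set of leading monomials (for $<$) of the nonzero rows of the Gaussian elimination (row echelon form) of $\mathrm{M_3H}(\{f_1,\dots,f_{k-1}\},\mathbf{d}-\deg(f_k),<)$.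 Then, for every monomial $\mathbf{x}^\beta\in\mathbb{K}[\mathbf{x}]_{\mathbf{d}-\deg(f_k)}$ with $\mathbf{x}^\beta\notin\mathfrak{L}$, append the row $\mathbf{x}^\beta\cdot f_k$. Return the resulting matrix. *)

From HB Require Import structures.
From mathcomp Require Import all_boot all_algebra.
From mathcomp Require Import mpoly.

Set Implicit Arguments.
Unset Strict Implicit.
Unset Printing Implicit Defensive.

Import GRing.Theory.
Local Open Scope ring_scope.

(* Variables are indexed by 'I_N; the block (grading) of each variable is
   given by grp : 'I_N -> 'I_r, so variable j has multidegree e_(grp j). *)

Section Multigraded.
Variables (N r : nat) (grp : 'I_N -> 'I_r).

Definition mdegv (m : 'X_{1..N}) (i : 'I_r) : nat :=
  (\sum_(j < N | grp j == i) m j)%N.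

Definition mnm_of_deg (d : 'I_r -> int) (m : 'X_{1..N}) : bool :=
  [forall i, (mdegv m i)%:Z == d i].

(* the list of all monomials of K[x]_d (empty if d has a negative entry) *)
Definition monos (d : 'I_r -> int) : seq 'X_{1..N} :=
  [seq val m | m <- Finite.enum 'X_{1..N < (\sum_(i < r) `|d i|).+1}
             & mnm_of_deg d (val m)].

Variable K : fieldType.

(* p lies in K[x]_d (the zero polynomial lies in every K[x]_d) *)
Definition is_mhomog (d : 'I_r -> int) (p : {mpoly K[N]}) : Prop :=
  forall m, m \in msupp p -> mnm_of_deg d m.

Definition multihomogeneous (p : {mpoly K[N]}) : Prop :=
  exists d, is_mhomog d p.

(* multidegree of a (nonzero multihomogeneous) polynomial *)
Definition pdeg (p : {mpoly K[N]}) (i : 'I_r) : int :=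
  (mdegv (head 0%MM (msupp p)) i)%:Z.

Definition in_ideal (fs : seq {mpoly K[N]}) (p : {mpoly K[N]}) : Prop :=
  exists g : 'I_(size fs) -> {mpoly K[N]}, p = \sum_(i < size fs) g i * fs`_i.

Definition in_span (s : seq {mpoly K[N]}) (p : {mpoly K[N]}) : Prop :=
  exists c : 'I_(size s) -> K, p = \sum_(i < size s) c i *: s`_i.

Definition monomial_order (le : rel 'X_{1..N}) : Prop :=
  [/\ reflexive le, antisymmetric le, transitive le, total le &
      ((forall m, le 0%MM m) /\
       (forall m1 m2 m, le m1 m2 -> le (m1 + m)%MM (m2 + m)%MM))].

Variable le : rel 'X_{1..N}.

(* leading monomial for le (max of the support; 0 for p = 0) *)
Definition lm (p : {mpoly K[N]}) : 'X_{1..N} :=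
  foldr (fun m acc => if le acc m then m else acc) 0%MM (msupp p).

Definition ltm_ (a b : 'X_{1..N}) : bool := le a b && (a != b).

(* e is a row echelon form (result of Gaussian elimination) of the Macaulay
   matrix whose rows are s, columns ordered decreasingly for le: same number of
   rows, same row space, nonzero rows first with strictly decreasing leading
   monomials, then zero rows. *)
Definition is_ref (s e : seq {mpoly K[N]}) : Prop :=
  [/\ size e = size s,
      (forall p, in_span s p <-> in_span e p) &
      exists e1 k, [/\ e = e1 ++ nseq k 0, all (fun q => q != 0) e1 &
                       sorted (fun a b => ltm_ (lm b) (lm a)) e1]].

Variable ech : seq {mpoly K[N]} -> seq {mpoly K[N]}.

(* M3H on the reversed list gs = [:: f_k; ...; f_1]; a Macaulay matrix is
   represented by the list of polynomials of its rows. *)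
Fixpoint M3Hr (gs : seq {mpoly K[N]}) (d : 'I_r -> int) {struct gs}
  : seq {mpoly K[N]} :=
  match gs with
  | [::] => [::]
  | f :: gs' =>
    let d' := fun i => d i - pdeg f i in
    let L := [seq lm e | e <- ech (M3Hr gs' d') & e != 0] in
    M3Hr gs' d ++ [seq 'X_[b] * f | b <- monos d' & b \notin L]
  end.

Definition M3H (fs : seq {mpoly K[N]}) (d : 'I_r -> int) :=
  M3Hr (rev fs) d.

End Multigraded.

From HB Require Import structures.
From mathcomp Require Import all_boot all_algebra.
From mathcomp Require Import mpoly.
Import GRing.Theory.
Local Open Scope ring_scope.

(* Every row of M3H is a monomial multiple x^b f_j of multidegree d, so the
   row space lies in [<f_1, ..., f_k>]_d.  Conversely, by taking multidegree-d
   parts it suffices that every x^m f_j of multidegree d lies in the row space.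
   By induction on k, the rows built from f_1, ..., f_(k-1) span
   [<f_1, ..., f_(k-1)>]_d for every d, which covers j < k.  For j = k, a
   skipped monomial m is the leading monomial of a nonzero row e of the
   echelon form for degree d - deg f_k, so e lies in
   [<f_1, ..., f_(k-1)>]_(d - deg f_k) and
   x^m f_k = (e f_k - sum of e_x x^x f_k over the smaller monomials x) / e_m,
   where e f_k is covered by induction on k and the x^x f_k by induction
   along the monomial order. *)

Section MacaulayRowSpace.
Set Implicit Arguments.
Unset Strict Implicit.

Variables (K : fieldType) (N r : nat) (grp : 'I_N -> 'I_r).
Local Notation P := {mpoly K[N]}.

Section LinearSpan.

Lemma in_span0 (s : seq P) : in_span s 0.
Proof. by exists (fun _ => 0); rewrite big1 // => i _; rewrite scale0r. Qed.

Lemma in_spanD (s : seq P) p q : in_span s p -> in_span s q -> in_span s (p + q).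
Proof.
case=> c -> [c' ->]; exists (fun i => c i + c' i).
by rewrite -big_split; apply: eq_bigr => i _; rewrite scalerDl.
Qed.

Lemma in_spanZ (s : seq P) a p : in_span s p -> in_span s (a *: p).
Proof.
case=> c ->; exists (fun i => a * c i).
by rewrite scaler_sumr; apply: eq_bigr => i _; rewrite scalerA.
Qed.

Lemma in_spanB (s : seq P) p q : in_span s p -> in_span s q -> in_span s (p - q).
Proof. by move=> hp hq; rewrite -scaleN1r; apply/in_spanD/in_spanZ. Qed.

Lemma in_span_sum (s : seq P) (I : Type) (t : seq I) (A : pred I) (F : I -> P) :
  (forall i, A i -> in_span s (F i)) -> in_span s (\sum_(i <- t | A i) F i).
Proof. by move=> hF; apply: big_ind => //; [exact: in_span0 | exact: in_spanD]. Qed.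

Lemma mem_in_span (s : seq P) q : q \in s -> in_span s q.
Proof.
move=> qs; pose i := Ordinal (elimT idP (etrans (index_mem q s) qs)).
exists (fun j => (j == i)%:R); rewrite (bigD1 i) //= eqxx scale1r nth_index //.
by rewrite big1 ?addr0 // => j /negbTE ->; rewrite scale0r.
Qed.

Lemma in_span_ind (Q : P -> Prop) (s : seq P) :
  Q 0 -> (forall p q, Q p -> Q q -> Q (p + q)) ->
  (forall a p, Q p -> Q (a *: p)) -> (forall q, q \in s -> Q q) ->
  forall p, in_span s p -> Q p.
Proof.
move=> Q0 QD QZ Qs p [c ->]; apply: big_ind => // i _.
by apply/QZ/Qs; apply: mem_nth.
Qed.

Lemma in_span_subset (s t : seq P) : {subset s <= t} ->
  forall p, in_span s p -> in_span t p.
Proof.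
move=> st; apply: in_span_ind; [exact: in_span0 | exact: in_spanD |
  exact: in_spanZ | by move=> q /st; apply: mem_in_span].
Qed.

End LinearSpan.

Section Ideal.

Lemma in_ideal0 (s : seq P) : in_ideal s 0.
Proof. by exists (fun _ => 0); rewrite big1 // => i _; rewrite mul0r. Qed.

Lemma in_idealD (s : seq P) p q :
  in_ideal s p -> in_ideal s q -> in_ideal s (p + q).
Proof.
case=> c -> [c' ->]; exists (fun i => c i + c' i).
by rewrite -big_split; apply: eq_bigr => i _; rewrite mulrDl.
Qed.

Lemma in_idealMl (s : seq P) g p : in_ideal s p -> in_ideal s (g * p).
Proof.
case=> c ->; exists (fun i => g * c i).
by rewrite mulr_sumr; apply: eq_bigr => i _; rewrite mulrA.
Qed.

Lemma mem_in_ideal (s : seq P) q : q \in s -> in_ideal s q.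
Proof.
move=> qs; pose i := Ordinal (elimT idP (etrans (index_mem q s) qs)).
exists (fun j => (j == i)%:R); rewrite (bigD1 i) //= eqxx mul1r nth_index //.
by rewrite big1 ?addr0 // => j /negbTE ->; rewrite mul0r.
Qed.

Lemma in_ideal_ind (Q : P -> Prop) (s : seq P) :
  Q 0 -> (forall p q, Q p -> Q q -> Q (p + q)) ->
  (forall g q, q \in s -> Q (g * q)) -> forall p, in_ideal s p -> Q p.
Proof. by move=> Q0 QD Qs p [c ->]; apply: big_ind => // i _; apply/Qs/mem_nth. Qed.

Lemma in_ideal_subset (s t : seq P) : {subset s <= t} ->
  forall p, in_ideal s p -> in_ideal t p.
Proof.
move=> st; apply: in_ideal_ind; [exact: in_ideal0 | exact: in_idealD |].
by move=> g q /st /mem_in_ideal; apply: in_idealMl.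
Qed.

Lemma in_ideal_nil (p : P) : in_ideal [::] p -> p = 0.
Proof. by case=> c ->; rewrite big_ord0. Qed.

End Ideal.

Section Multidegree.

Lemma mdegvD (m1 m2 : 'X_{1..N}) i :
  mdegv grp (m1 + m2)%MM i = (mdegv grp m1 i + mdegv grp m2 i)%N.
Proof. by rewrite /mdegv -big_split; apply: eq_bigr => j _; rewrite mnmDE. Qed.

Lemma mem_monos d m : (m \in monos grp d) = mnm_of_deg grp d m.
Proof.
apply/idP/idP => [|dm]; first by case/mapP => x; rewrite mem_filter => /andP[+ _] ->.
have mdeg_lt : (mdeg m < (\sum_(i < r) `|d i|).+1)%N.
  rewrite ltnS mdegE (partition_big grp predT) //=.
  by apply: leq_sum => i _; rewrite -(eqP (forallP dm i)).
apply/mapP; exists (BMultinom mdeg_lt) => //.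
by rewrite mem_filter dm -enumT mem_enum.
Qed.

Lemma mhomog0 d : is_mhomog grp d (0 : P).
Proof. by move=> m; rewrite msupp0. Qed.

Lemma mhomogD d (p q : P) :
  is_mhomog grp d p -> is_mhomog grp d q -> is_mhomog grp d (p + q).
Proof. by move=> hp hq m /msuppD_le; rewrite mem_cat => /orP[/hp|/hq]. Qed.

Lemma mhomogZ d a (p : P) : is_mhomog grp d p -> is_mhomog grp d (a *: p).
Proof. by move=> hp m /msuppZ_le /hp. Qed.

Lemma mhomogM d e (p q : P) : is_mhomog grp (fun i => d i - e i) p ->
  is_mhomog grp e q -> is_mhomog grp d (p * q).
Proof.
move=> hp hq m /msuppM_le /allpairsP [[m1 m2] /= [/hp dm1 /hq dm2 ->]].
apply/forallP => i; rewrite mdegvD PoszD.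
by rewrite (eqP (forallP dm1 i)) (eqP (forallP dm2 i)) subrK.
Qed.

Lemma mhomog_mulX d e b (h : P) : mnm_of_deg grp (fun i => d i - e i) b ->
  is_mhomog grp e h -> is_mhomog grp d ('X_[b] * h).
Proof. by move=> db; apply: mhomogM => m; rewrite msuppX mem_seq1 => /eqP ->. Qed.

Lemma mhomog_pdeg (p : P) :
  p != 0 -> multihomogeneous grp p -> is_mhomog grp (pdeg grp p) p.
Proof.
move=> nz_p [e hp] m /hp dm; apply/forallP => i; rewrite (eqP (forallP dm i)).
have : head 0%MM (msupp p) \in msupp p.
  by move: nz_p; rewrite -msupp_eq0; case: (msupp p) => //= x s _; rewrite inE eqxx.
by move/hp/forallP/(_ i)/eqP; rewrite /pdeg => ->.
Qed.

End Multidegree.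

Section MultihomogeneousPart.

Definition mhomog_part d (p : P) : P :=
  \sum_(m <- msupp p | mnm_of_deg grp d m) p@_m *: 'X_[m].

Lemma mcoeff_mhomog_part d p m :
  (mhomog_part d p)@_m = if mnm_of_deg grp d m then p@_m else 0.
Proof.
rewrite /mhomog_part raddf_sum big_mkcond /=.
under eq_bigr => x _ do rewrite mcoeffZ mcoeffX.
have [pm|pm] := boolP (m \in msupp p).
  rewrite (bigD1_seq m) ?msupp_uniq //= eqxx mulr1 big1 ?addr0 // => x /negbTE.
  by move=> ->; rewrite mulr0 if_same.
rewrite memN_msupp_eq0 // if_same big_seq big1 // => x xp.
by case: eqP => [xm|_]; [rewrite -xm xp in pm | rewrite mulr0 if_same].
Qed.

Lemma mhomog_part0 d : mhomog_part d 0 = 0.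
Proof. by rewrite /mhomog_part msupp0 big_nil. Qed.

Lemma mhomog_partD d p q :
  mhomog_part d (p + q) = mhomog_part d p + mhomog_part d q.
Proof.
apply/mpolyP => m; rewrite mcoeffD !mcoeff_mhomog_part mcoeffD.
by case: ifP; rewrite ?addr0.
Qed.

Lemma mhomog_partZ d a p : mhomog_part d (a *: p) = a *: mhomog_part d p.
Proof.
apply/mpolyP => m; rewrite mcoeffZ !mcoeff_mhomog_part mcoeffZ.
by case: ifP; rewrite ?mulr0.
Qed.

Lemma mhomog_part_id d p : is_mhomog grp d p -> mhomog_part d p = p.
Proof.
move=> hp; rewrite [RHS]mpolyE /mhomog_part big_seq_cond [RHS]big_seq.
by apply: eq_bigl => m; apply/andb_idr => /hp.
Qed.

Lemma mhomog_part_mulX d e m (h : P) : is_mhomog grp e h ->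
  mhomog_part d ('X_[m] * h) =
    if mnm_of_deg grp (fun i => d i - e i) m then 'X_[m] * h else 0.
Proof.
move=> hh; case: ifP => dm; first by apply/mhomog_part_id/(mhomog_mulX dm).
rewrite /mhomog_part big_seq_cond big1 // => x /andP[+ dx].
move=> /msuppM_le /allpairsP [[m1 m2] /= [+ /hh dm2 xE]].
rewrite msuppX mem_seq1 => /eqP m1E; move: dx; rewrite xE m1E => dx.
move/negbT: dm; case/negP; apply/forallP => i.
by rewrite -(eqP (forallP dm2 i)) -(eqP (forallP dx i)) mdegvD PoszD addrK.
Qed.

End MultihomogeneousPart.

Lemma mulX_msuppE (e f : P) m : m \in msupp e ->
  'X_[m] * f =
    (e@_m)^-1 *: (e * f - \sum_(x <- msupp e | x != m) e@_x *: ('X_[x] * f)).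
Proof.
move=> me; have nz_em : e@_m != 0 by rewrite -mcoeff_msupp.
have -> : e * f = \sum_(x <- msupp e) e@_x *: ('X_[x] * f).
  by rewrite {1}(mpolyE e) mulr_suml; apply: eq_bigr => x _; rewrite scalerAl.
by rewrite (bigD1_seq m) ?msupp_uniq //= addrK scalerA mulVf ?scale1r.
Qed.

Section MonomialOrder.
Variable le : rel 'X_{1..N}.
Hypothesis le_order : monomial_order le.

Lemma lm_spec (p : P) :
  {in msupp p, forall m, le m (lm le p)} /\ (p != 0 -> lm le p \in msupp p).
Proof.
have [le_refl _ le_trans le_total [le0 _]] := le_order.
rewrite /lm -msupp_eq0; elim: (msupp p) => [|y s [IHle IHmem]] //=.
set M := foldr _ 0%MM s in IHle IHmem *.
case: ifP => [My|yM]; split=> [m|]; rewrite ?inE ?eqxx //.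
- by case/orP=> [/eqP -> //|/IHle mM]; apply: le_trans My.
- by case/orP=> [/eqP ->|/IHle //]; case/orP: (le_total M y); rewrite ?yM.
- by move=> _; rewrite IHmem ?orbT //; apply: contraFneq yM => s0; rewrite /M s0.
Qed.

Lemma lm_max (p : P) m : m \in msupp p -> le m (lm le p).
Proof. exact: (lm_spec p).1. Qed.

Lemma lm_msupp (p : P) : p != 0 -> lm le p \in msupp p.
Proof. exact: (lm_spec p).2. Qed.

Lemma count_le_ltm (s : seq 'X_{1..N}) x m : m \in s -> ltm_ le x m ->
  (count (le^~ x) s < count (le^~ m) s)%N.
Proof.
have [le_refl le_anti le_trans _ _] := le_order.
move=> ms /andP[xm neq_xm]; have mx : ~~ le m x.
  by apply: contra neq_xm => mx; rewrite (le_anti x m) ?xm.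
elim: s ms => [|y s IHs] //; rewrite inE /= => /orP[/eqP <-|ys].
  by rewrite le_refl (negbTE mx) add1n ltnS; apply/sub_count => z /le_trans; apply.
rewrite /= -addnS; apply: leq_add; last exact: IHs.
by have := le_trans x y m; case: (le y x) => // /(_ isT xm) ->.
Qed.

Lemma ltm_ind (s : seq 'X_{1..N}) (Q : 'X_{1..N} -> Prop) :
  (forall m, m \in s -> (forall x, x \in s -> ltm_ le x m -> Q x) -> Q m) ->
  forall m, m \in s -> Q m.
Proof.
move=> step m; have [n] := ubnP (count (le^~ m) s); elim: n m => // n IHn m.
rewrite ltnS => cnt ms; apply: step => // x xs xm.
by apply: IHn => //; apply: leq_trans cnt; apply: count_le_ltm.
Qed.

End MonomialOrder.

Section MacaulayMatrix.
Variables (le : rel 'X_{1..N}) (ech : seq P -> seq P).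
Hypotheses (le_order : monomial_order le)
  (ech_ref : forall s, is_ref le s (ech s)).
Local Notation M3Hr := (M3Hr grp le ech).

Definition mhomog_gens (gs : seq P) :=
  {in gs, forall g, is_mhomog grp (pdeg grp g) g}.

Lemma mhomog_gens_cons f gs :
  mhomog_gens (f :: gs) -> is_mhomog grp (pdeg grp f) f /\ mhomog_gens gs.
Proof. by move=> hgs; split=> [|g gs_g]; apply: hgs; rewrite inE ?eqxx ?gs_g ?orbT. Qed.

Lemma mem_M3Hr gs d q : mhomog_gens gs -> q \in M3Hr gs d ->
  is_mhomog grp d q /\ in_ideal gs q.
Proof.
elim: gs d q => [|f gs IH] //= d q /mhomog_gens_cons[hf hgs].
rewrite mem_cat => /orP[/(IH _ _ hgs) [dq ideal_q]|].
  split=> //; apply: in_ideal_subset ideal_q => g.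
  exact: (mem_behead (s := f :: gs)).
case/mapP=> b; rewrite mem_filter mem_monos => /andP[_ db] ->.
by split; [exact: mhomog_mulX db hf | apply/in_idealMl/mem_in_ideal/mem_head].
Qed.

Lemma in_span_M3Hr gs d p : mhomog_gens gs -> in_span (M3Hr gs d) p ->
  is_mhomog grp d p /\ in_ideal gs p.
Proof.
move=> hgs; apply: (in_span_ind (Q := fun p => is_mhomog grp d p /\ in_ideal gs p))
  => [|p1 p2 [? ?] [? ?]|a p1 [? ?]|q /(mem_M3Hr hgs)] //.
- by split; [exact: mhomog0 | exact: in_ideal0].
- by split; [exact: mhomogD | exact: in_idealD].
- by split; [exact: mhomogZ | rewrite -mul_mpolyC; exact: in_idealMl].
Qed.

Lemma in_span_M3Hr_cons f gs d p :
  in_span (M3Hr gs d) p -> in_span (M3Hr (f :: gs) d) p.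
Proof. by apply: in_span_subset => q qs /=; rewrite mem_cat qs. Qed.

Lemma in_span_M3Hr_of_multiples gs d p : mhomog_gens gs ->
  (forall g, g \in gs -> forall m, mnm_of_deg grp (fun i => d i - pdeg grp g i) m ->
     in_span (M3Hr gs d) ('X_[m] * g)) ->
  is_mhomog grp d p -> in_ideal gs p -> in_span (M3Hr gs d) p.
Proof.
move=> hgs multiples_in dp ideal_p; rewrite -(mhomog_part_id dp) {dp}.
move: p ideal_p.
apply: (in_ideal_ind (Q := fun p => in_span (M3Hr gs d) (mhomog_part d p)))
  => [|p q|g h gs_h].
- by rewrite mhomog_part0; apply: in_span0.
- by rewrite mhomog_partD; apply: in_spanD.
rewrite (mpolyE g) mulr_suml (big_morph _ (mhomog_partD d) (mhomog_part0 d)).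
apply: in_span_sum => m _; rewrite -scalerAl mhomog_partZ; apply: in_spanZ.
rewrite (mhomog_part_mulX _ _ (hgs h gs_h)).
by case: ifP => [/multiples_in|_]; [apply | exact: in_span0].
Qed.

Lemma M3Hr_head_multiples f gs d m :
  is_mhomog grp (pdeg grp f) f -> mhomog_gens gs ->
  (forall d' p, is_mhomog grp d' p -> in_ideal gs p -> in_span (M3Hr gs d') p) ->
  mnm_of_deg grp (fun i => d i - pdeg grp f i) m ->
  in_span (M3Hr (f :: gs) d) ('X_[m] * f).
Proof.
move=> hf hgs gs_complete; rewrite -mem_monos; set d' := fun i => _.
move: m; apply: (ltm_ind le_order) => m dm IHm.
set L := [seq lm le e | e <- ech (M3Hr gs d') & e != 0].
have [mL|mL] := boolP (m \in L); last first.
  apply: mem_in_span; rewrite /= mem_cat; apply/orP; right.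
  by apply/mapP; exists m; rewrite // mem_filter mL dm.
case/mapP: mL => e; rewrite mem_filter => /andP[nz_e ech_e] mE; subst m.
have [_ span_ech _] := ech_ref (M3Hr gs d').
have [d'e ideal_e] : is_mhomog grp d' e /\ in_ideal gs e.
  by apply: (in_span_M3Hr hgs); apply/span_ech/mem_in_span.
rewrite (mulX_msuppE f (lm_msupp le_order nz_e)); apply/in_spanZ/in_spanB.
  apply/in_span_M3Hr_cons/gs_complete; first exact: mhomogM d'e hf.
  by rewrite mulrC; apply: in_idealMl.
rewrite big_seq_cond; apply: in_span_sum => x /andP[xe neq_x].
apply/in_spanZ/IHm; first by rewrite mem_monos; apply: d'e.
by rewrite /ltm_ neq_x (lm_max le_order xe).
Qed.

Lemma M3Hr_complete gs d p : mhomog_gens gs ->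
  is_mhomog grp d p -> in_ideal gs p -> in_span (M3Hr gs d) p.
Proof.
elim: gs d p => [|f gs IH] d p hgs dp ideal_p.
  by rewrite (in_ideal_nil ideal_p); apply: in_span0.
have [hf hgs'] := mhomog_gens_cons hgs.
apply: (in_span_M3Hr_of_multiples hgs) => // g.
rewrite inE => /orP[/eqP->|gs_g] m dm.
  by apply: M3Hr_head_multiples => // d' q; apply: IH.
apply/in_span_M3Hr_cons/IH => //; first exact: mhomog_mulX dm (hgs' g gs_g).
by apply/in_idealMl/mem_in_ideal.
Qed.

End MacaulayMatrix.

End MacaulayRowSpace.

Theorem mainTheorem16 (K : fieldType) (charK0 : [pchar K] =i pred0)
  (N r : nat) (grp : 'I_N -> 'I_r) (grp_surj : forall i, exists j, grp j = i)
  (le : rel 'X_{1..N}) (hle : monomial_order le)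
  (ech : seq {mpoly K[N]} -> seq {mpoly K[N]})
  (hech : forall s, is_ref le s (ech s))
  (fs : seq {mpoly K[N]}) (hk : (0 < size fs)%N)
  (hfs : forall f, f \in fs -> f != 0 /\ multihomogeneous grp f)
  (d : 'I_r -> int) :
  forall p : {mpoly K[N]},
    in_span (M3H grp le ech fs d) p <-> (is_mhomog grp d p /\ in_ideal fs p).
Proof.
move=> p; have gens : mhomog_gens grp (rev fs).
  by move=> g; rewrite mem_rev => /hfs[nz_g /(mhomog_pdeg nz_g)].
have ideal_rev q : in_ideal (rev fs) q <-> in_ideal fs q.
  by split; apply: in_ideal_subset => g; rewrite mem_rev.
rewrite /M3H; split=> [/(in_span_M3Hr gens) [dp /ideal_rev]|[dp /ideal_rev]] //.
exact: M3Hr_complete.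
Qed.
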